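(* Let $X$ be a space with $\chi(X)\le\aleph_0$. There is no continuous, effective and transitive action on $X$ of an $\omega$-balanced group $G$ with $\psi(G)>\aleph_0$.
   Context: All spaces are Tychonoff. An action is effective if only the unit fixes every point, transitive if $Gx=X$. $\psi(G)$ is the pseudocharacter. $G$ is $\omega$-balanced if for each neighborhood $U$ of the unit there is a countable family $\gamma$ of neighborhoods of the unit such that each $x\in G$ has some $V\in\gamma$ with $xVx^{-1}\subset U$. *)

From HB Require Import structures.
From mathcomp Require Import all_boot all_order all_algebra.
From mathcomp Require Import all_classical all_reals all_analysis.
From mathcomp Require Import Rstruct Rstruct_topology.
Set Implicit Arguments. Unset Strict Implicit. Unset Printing Implicit Defensive.
Local Open Scope classical_set_scope.

Definition tychonoff_space (T : topologicalType) : Prop :=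
  hausdorff_space T /\ completely_regular_space T.

Definition countable_character (X : topologicalType) : Prop :=
  forall x : X, exists B : set (set X),
    countable B /\ (forall U, B U -> open_nbhs x U) /\
    (forall V, nbhs x V -> exists2 U, B U & U `<=` V).

Definition countable_pseudocharacter (T : topologicalType) : Prop :=
  forall x : T, exists F : set (set T),
    countable F /\ (forall U, F U -> open U) /\ \bigcap_(U in F) U = [set x].

Definition topological_group (G : topologicalType)
    (mul : G -> G -> G) (inv : G -> G) (e : G) : Prop :=
  [/\ (forall x y z, mul x (mul y z) = mul (mul x y) z),
      (forall x, mul e x = x /\ mul x e = x),
      (forall x, mul (inv x) x = e /\ mul x (inv x) = e),
      continuous (fun p : G * G => mul p.1 p.2) &
      continuous inv].

Definition omega_balanced (G : topologicalType)
    (mul : G -> G -> G) (inv : G -> G) (e : G) : Prop :=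
  forall U : set G, nbhs e U ->
    exists gamma : set (set G),
      countable gamma /\ (forall V, gamma V -> nbhs e V) /\
      (forall x : G, exists2 V, gamma V &
         (forall v, V v -> U (mul (mul x v) (inv x)))).

Definition group_action (G X : Type) (mul : G -> G -> G) (e : G)
    (act : G -> X -> X) : Prop :=
  (forall x, act e x = x) /\ (forall g h x, act (mul g h) x = act g (act h x)).

Definition effective_action (G X : Type) (e : G) (act : G -> X -> X) : Prop :=
  forall g, (forall x, act g x = x) -> g = e.

Definition transitive_action (G X : Type) (act : G -> X -> X) : Prop :=
  forall x y : X, exists g, act g x = y.

From mathcomp Require Import all_boot all_order all_algebra.
From mathcomp Require Import all_classical all_reals all_analysis.
Local Open Scope classical_set_scope.

(* Fix x0 in X with a countable local base B.  For b in B the set of g with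
   g x0 in b is a neighbourhood of the unit, and omega-balancedness yields
   countably many neighbourhoods V of the unit such that for every b and every
   x some V satisfies x V x^-1 x0 in b.  An element g lying in all these V
   therefore has every conjugate x g x^-1 sending x0 into every b, hence
   (X being T1) fixing x0; by transitivity g fixes every point, so g is the
   unit by effectiveness.  Thus the unit is a countable intersection of open
   sets, and translating shows psi(G) <= aleph_0. *)

Section ContinuousSections.
Context {A B C : topologicalType} {h : A -> B -> C}.
Hypothesis h_cont : continuous (fun p : A * B => h p.1 p.2).

Lemma continuous2_sectionl (b : B) : continuous (h ^~ b).
Proof.
move=> a.
exact: (@continuous2_cvg _ _ _ _ _ _ id (cst b) h a b (h_cont (a, b)) cvg_id (cvg_cst b)).
Qed.

Lemma continuous2_sectionr (a : A) : continuous (h a).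
Proof.
move=> b.
exact: (@continuous2_cvg _ _ _ _ _ _ (cst a) id h a b (h_cont (a, b)) (cvg_cst a) cvg_id).
Qed.

End ContinuousSections.

Definition countable_character_at {T : topologicalType} (x : T) : Prop :=
  exists B : set (set T),
    countable B /\ (forall U, B U -> open_nbhs x U) /\
    (forall V, nbhs x V -> exists2 U, B U & U `<=` V).

Definition countable_pseudocharacter_at {T : topologicalType} (x : T) : Prop :=
  exists F : set (set T),
    countable F /\ (forall U, F U -> open U) /\ \bigcap_(U in F) U = [set x].

Lemma countable_pseudocharacter_at_nbhs {T : topologicalType} {x : T}
    {V : set (set T)} :
  countable V -> (forall U, V U -> nbhs x U) -> \bigcap_(U in V) U `<=` [set x] ->
  countable_pseudocharacter_at x.
Proof.
move=> cV Vx capV; exists (interior @` V); split.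
  exact: sub_countable (card_image_le _ _) cV.
split; first by move=> _ [U _ <-]; exact: open_interior.
rewrite bigcap_image; apply/seteqP; split.
  by move=> y Vy; apply: capV => U /Vy /interior_subset.
by move=> _ -> U /Vx.
Qed.

Section GroupAction.
Context {G X : Type} {mul : G -> G -> G} {inv : G -> G} {e : G}.
Context {act : G -> X -> X}.
Hypothesis mulVg : forall g, mul (inv g) g = e.
Hypothesis act_group : group_action mul e act.

Lemma actK (g : G) : cancel (act g) (act (inv g)).
Proof. by move=> y; case: act_group => act1 actM; rewrite -actM mulVg act1. Qed.

Lemma act_inj (g : G) : injective (act g).
Proof. exact: can_inj (actK g). Qed.

Lemma conj_moves_point (x0 : X) (g : G) :
  effective_action e act -> transitive_action act -> g <> e ->
  exists x, act (mul (mul x g) (inv x)) x0 <> x0.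
Proof.
move=> eff trans gNe.
have [y gy] : exists y, act g y <> y.
  by apply: contrapT => /forallNP fixg; apply/gNe/eff => y; apply: contrapT.
have [x xy] := trans y x0; exists x.
have [_ actM] := act_group.
rewrite !actM -xy actK => /act_inj.
exact: gy.
Qed.

End GroupAction.

Lemma omega_balanced_countable {G : topologicalType}
    {mul : G -> G -> G} {inv : G -> G} {e : G} {U : set (set G)} :
  omega_balanced mul inv e -> countable U -> (forall W, U W -> nbhs e W) ->
  exists V : set (set G),
    [/\ countable V, (forall W, V W -> nbhs e W) &
        forall W x, U W -> exists2 W', V W' &
          forall v, W' v -> W (mul (mul x v) (inv x))].
Proof.
move=> bal cU Ue.
have choose_gamma W : exists gW : set (set G), U W ->
    [/\ countable gW, (forall W', gW W' -> nbhs e W') &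
        forall x, exists2 W', gW W' &
          forall v, W' v -> W (mul (mul x v) (inv x))].
  have [/Ue /bal [gW [? [? ?]]]|nUW] := pselect (U W).
    by exists gW.
  by exists set0 => /nUW.
have [gamma gammaP] := boolp.choice choose_gamma.
exists (\bigcup_(W in U) gamma W); split.
- by apply: bigcup_countable => // W /gammaP [].
- by move=> W' [W /gammaP [_ + _]]; apply.
- move=> W x /[dup] UW /gammaP [_ _ /(_ x) [W' gW' W'W]].
  by exists W' => //; exists W.
Qed.

Lemma countable_pseudocharacter_translate {G : topologicalType}
    {mul : G -> G -> G} {inv : G -> G} {e : G} :
  topological_group mul inv e -> countable_pseudocharacter_at e ->
  countable_pseudocharacter G.
Proof.
move=> [mulA mul1 mulV mul_cont _] [F [cF [oF capF]]] a.
exists (preimage (mul (inv a)) @` F); split.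
  exact: sub_countable (card_image_le _ _) cF.
split.
  move=> _ [U FU <-].
  by have /continuousP := continuous2_sectionr mul_cont (inv a); apply; exact: oF.
rewrite bigcap_image -preimage_bigcap capF; apply/seteqP; split => y /=.
  by move=> aye; rewrite -[y](mul1 y).1 -(mulV a).2 -mulA aye (mul1 a).2.
by move=> ->; rewrite (mulV a).1.
Qed.

Section OmegaBalancedAction.
Context {G X : topologicalType} {mul : G -> G -> G} {inv : G -> G} {e : G}.
Context {act : G -> X -> X} {x0 : X}.
Hypothesis mulVg : forall g, mul (inv g) g = e.
Hypothesis act_group : group_action mul e act.
Hypothesis X_T1 : accessible_space X.
Hypothesis base_x0 : countable_character_at x0.
Hypothesis orbit_cont : {for e, continuous (act ^~ x0)}.
Hypothesis balanced : omega_balanced mul inv e.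
Hypothesis effective : effective_action e act.
Hypothesis transitive : transitive_action act.

Let orbit_preimage (b : set X) : set G := [set g | b (act g x0)].

Lemma nbhs_orbit_preimage (b : set X) : nbhs x0 b -> nbhs e (orbit_preimage b).
Proof.
have [act1 _] := act_group.
by move=> b_x0; apply: orbit_cont; rewrite act1.
Qed.

Lemma omega_balanced_action_pseudocharacter : countable_pseudocharacter_at e.
Proof.
have [B [cB [Bx0 Bbase]]] := base_x0.
have U_nbhs W : (orbit_preimage @` B) W -> nbhs e W.
  by move=> [b Bb <-]; apply/nbhs_orbit_preimage/open_nbhs_nbhs/Bx0.
have [V [cV Ve VB]] := omega_balanced_countable balanced
  (sub_countable (card_image_le orbit_preimage B) cB) U_nbhs.
apply: (countable_pseudocharacter_at_nbhs cV Ve) => g Vg.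
apply: contrapT => /(conj_moves_point mulVg act_group x0 _ effective transitive).
move=> [x]; set k := mul (mul x g) (inv x) => kx0.
have [A [oA Ax0 kA]] := X_T1 _ _ (introN eqP (nesym kx0)).
have [b Bb bA] := Bbase A (open_nbhs_nbhs (conj oA (set_mem Ax0))).
have [W' VW' W'k] := VB _ x (ex_intro2 _ _ b Bb erefl).
have b_kx0 : b (act k x0) := W'k g (Vg W' VW').
by move: kA; rewrite inE => /(_ (bA _ b_kx0)).
Qed.

End OmegaBalancedAction.

Theorem corollary4p11 (X G : topologicalType)
    (mul : G -> G -> G) (inv : G -> G) (e : G) (act : G -> X -> X) :
  tychonoff_space X -> tychonoff_space G ->
  countable_character X ->
  topological_group mul inv e ->
  omega_balanced mul inv e ->
  ~ countable_pseudocharacter G ->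
  group_action mul e act ->
  continuous (fun p : G * X => act p.1 p.2) ->
  effective_action e act ->
  transitive_action act ->
  False.
Proof.
move=> [X_hausdorff _] _ charX TG balanced npsi act_group act_cont eff trans.
apply/npsi/(countable_pseudocharacter_translate TG).
have [[x0 _]|X0] := pselect (exists x : X, True).
  have [_ _ mulV _ _] := TG.
  apply: (omega_balanced_action_pseudocharacter (fun g => (mulV g).1) act_group
    (hausdorff_accessible X_hausdorff) (charX x0) _ balanced eff trans).
  exact: continuous2_sectionl act_cont x0 e.
apply: (countable_pseudocharacter_at_nbhs (countable1 setT)).
- by move=> _ ->; exact: filterT.
- by move=> g _; apply: eff => x; case: X0; exists x.
Qed.
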